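(* Let $N, N_{\tilde y}, M \in \mathbb{N}$, $X\in\mathbb{R}^{N\times M}$, $\tilde Y \in \mathbb{R}^{N_{\tilde y}\times M}$, $\lambda\ge0$, $\Omega=\{1,\dots,N\}$. Let $\tilde Y = U\Sigma V$ be a singular value decomposition with $U\in\mathbb{R}^{N_{\tilde y}\times N_{\tilde y}}$, $V\in\mathbb{R}^{M\times M}$ orthogonal and $\Sigma\in\mathbb{R}^{N_{\tilde y}\times M}$ having diagonal entries $\sigma_1(\tilde Y)\ge\sigma_2(\tilde Y)\ge\cdots$ and zeros elsewhere. For $r\le\operatorname{rank}\tilde Y$ let $Z = \Sigma_{1:r,1:r}V_{1:r}\in\mathbb{R}^{r\times M}$, where $V_{1:r}$ denotes the first $r$ rows of $V$. Then for any $S\subset\Omega$ with $X_SX_S^\top+\lambda I_{|S|}\succ0$ (or $S=\emptyset$), \[ 0 \le J_{\tilde Y}(S) - J_Z(S) \le \sum_{i=r+1}^{\operatorname{rank}\tilde Y}\sigma_i^2(\tilde Y). \]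
   Context: For a matrix $Y$ with $M$ columns and $S\subset\Omega$ with $X_SX_S^\top+\lambda I_{|S|}\succ0$, $J_Y(S) = \operatorname{tr}\{ Y X_S^\top (X_S X_S^\top + \lambda I_{|S|})^{-1} X_S Y^\top \}$, where $X_S$ is the submatrix of $X$ consisting of the rows indexed by $S$; $J_Y(\emptyset)=0$. *)

From mathcomp Require Import all_boot all_order all_algebra.
Set Implicit Arguments. Unset Strict Implicit. Unset Printing Implicit Defensive.
Import Order.TTheory GRing.Theory Num.Theory.
Local Open Scope ring_scope.

Definition orthogonal_mx (R : ringType) (n : nat) (Q : 'M[R]_n) : Prop :=
  Q^T *m Q = 1%:M /\ Q *m Q^T = 1%:M.

Definition posdef_mx (R : realFieldType) (n : nat) (A : 'M[R]_n) : Prop :=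
  A^T = A /\ forall v : 'rV[R]_n, v != 0 -> 0 < (v *m A *m v^T) 0 0.

(* X_S : the rows of X indexed by S (in increasing order). *)
Definition rows_of (R : Type) (N M : nat) (X : 'M[R]_(N, M)) (S : {set 'I_N})
  : 'M[R]_(#|S|, M) := rowsub (fun i : 'I_#|S| => enum_val i) X.

Definition J (R : realFieldType) (N M K : nat) (X : 'M[R]_(N, M)) (lambda : R)
  (Y : 'M[R]_(K, M)) (S : {set 'I_N}) : R :=
  let XS := rows_of X S in
  \tr (Y *m XS^T *m invmx (XS *m XS^T + lambda%:M) *m XS *m Y^T).

Definition Zmat (R : ringType) (Ny M r : nat) (hN : (r <= Ny)%N) (hM : (r <= M)%N)
  (Sigma : 'M[R]_(Ny, M)) (V : 'M[R]_M) : 'M[R]_(r, M) :=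
  mxsub (widen_ord hN) (widen_ord hM) Sigma *m rowsub (widen_ord hM) V.

From mathcomp Require Import all_boot all_order all_algebra.
From mathcomp Require Import ring lra.
Import Order.TTheory GRing.Theory Num.Theory.
Set Implicit Arguments. Unset Strict Implicit. Unset Printing Implicit Defensive.
Local Open Scope ring_scope.

(* Put P = X_S^T (X_S X_S^T + lambda I)^-1 X_S, so that J_Y(S) = tr (Y P Y^T)
   and 0 <= x P x^T <= x x^T for every row vector x.  With C = Sigma V the
   orthogonality of U gives J_Yt(S) = sum_i c_i P c_i^T over the rows c_i of C,
   and, Sigma being diagonal, J_Z(S) is the same sum over the first r rows.
   Each of the remaining terms lies between 0 and c_i c_i^T = |row_i Sigma|^2,
   which is sigma_i^2 for i < rank Yt and 0 beyond. *)

Lemma mulmx_tr_sym (R : comPzRingType) n (u v : 'rV[R]_n) :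
  (u *m v^T) 0 0 = (v *m u^T) 0 0.
Proof. by rewrite -[u *m v^T]trmxK trmx_mul trmxK mxE. Qed.

Lemma mulmx_tr_ge0 (R : realFieldType) n (x : 'rV[R]_n) : 0 <= (x *m x^T) 0 0.
Proof. by rewrite mxE; apply: sumr_ge0 => j _; rewrite mxE -expr2 sqr_ge0. Qed.

Lemma mulmx_tr_subr (R : comPzRingType) n (u v : 'rV[R]_n) :
  ((u - v) *m (u - v)^T) 0 0 =
    (u *m u^T) 0 0 - 2 * (u *m v^T) 0 0 + (v *m v^T) 0 0.
Proof.
rewrite linearB /= mulmxBl !mulmxBr.
(* take the (0, 0) entry of sums and opposites, but not of products *)
do ![rewrite [(_ + _ : 'M_1) _ _]mxE | rewrite [(- _ : 'M_1) _ _]mxE].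
rewrite (mulmx_tr_sym v u); ring.
Qed.

Section RidgeHat.

Variables (R : realFieldType) (s M : nat) (B : 'M[R]_(s, M)) (lambda : R).

Definition ridge_hat : 'M[R]_M := B^T *m invmx (B *m B^T + lambda%:M) *m B.

Hypotheses (lambda_ge0 : 0 <= lambda) (unit_gram : B *m B^T + lambda%:M \in unitmx).

Lemma ridge_hat_form_bounds (x : 'rV[R]_M) :
  0 <= (x *m ridge_hat *m x^T) 0 0 <= (x *m x^T) 0 0.
Proof.
(* With y = x B^T G^-1 and a = y B, where G = B B^T + lambda I, the form is
   a x^T = a a^T + lambda y y^T, and x x^T - a x^T = |a - x|^2 + lambda y y^T. *)
set y := x *m B^T *m invmx (B *m B^T + lambda%:M).
have y_gram : y *m (B *m B^T + lambda%:M) = x *m B^T by rewrite mulmxKV.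
have ->: (x *m ridge_hat *m x^T) 0 0 = (y *m B *m x^T) 0 0.
  by rewrite /ridge_hat /y !mulmxA.
clearbody y; set a := y *m B.
have gram_sym : (B *m B^T + lambda%:M)^T = B *m B^T + lambda%:M.
  by rewrite linearD /= trmx_mul trmxK tr_scalar_mx.
have axE : (a *m x^T) 0 0 = (a *m a^T) 0 0 + lambda * (y *m y^T) 0 0.
  rewrite -mulmxA -[B *m x^T]trmxK trmx_mul trmxK -y_gram trmx_mul gram_sym.
  rewrite mulmxA mulmxDr mulmxDl [(_ + _ : 'M_1) _ _]mxE /a trmx_mul !mulmxA.
  by rewrite mul_mx_scalar -scalemxAl [(_ *: _ : 'M_1) _ _]mxE.
have := mulmx_tr_ge0 y; have := mulmx_tr_ge0 a; have := mulmx_tr_ge0 (a - x).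
rewrite mulmx_tr_subr => dist_ge0 aa_ge0 yy_ge0.
have lyy_ge0 := mulr_ge0 lambda_ge0 yy_ge0.
by apply/andP; split; lra.
Qed.

End RidgeHat.

Lemma posdef_mx_unit (R : realFieldType) n (A : 'M[R]_n) :
  posdef_mx A -> A \in unitmx.
Proof.
case=> _ A_pos; rewrite unitmxE unitfE; apply/negP => /det0P [v v_neq0 vA0].
by have := A_pos v v_neq0; rewrite vA0 mul0mx mxE ltxx.
Qed.

Lemma posdef_mx_dim0 (R : realFieldType) n (A : 'M[R]_n) : n = 0%N -> posdef_mx A.
Proof.
move=> n0; subst n; split; first by apply/matrixP => -[].
by move=> v; rewrite [v]thinmx0 eqxx.
Qed.

Lemma J_ridge_hat (R : realFieldType) N M K (X : 'M[R]_(N, M)) lambda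
    (Y : 'M[R]_(K, M)) S :
  J X lambda Y S = \tr (Y *m ridge_hat (rows_of X S) lambda *m Y^T).
Proof. by rewrite /J /ridge_hat !mulmxA. Qed.

Lemma mxtrace_orthogonal_conj (R : comNzRingType) n (Q A : 'M[R]_n) :
  orthogonal_mx Q -> \tr (Q *m A *m Q^T) = \tr A.
Proof. by case=> QtQ _; rewrite mxtrace_mulC mulmxA QtQ mul1mx. Qed.

Lemma mulmx_tr_orthogonal (R : comNzRingType) n (Q : 'M[R]_n) (x : 'rV[R]_n) :
  orthogonal_mx Q -> x *m Q *m (x *m Q)^T = x *m x^T.
Proof. by case=> _ QQt; rewrite trmx_mul mulmxA -(mulmxA x) QQt mulmx1. Qed.

Lemma mxrank_orthogonal_conj (F : fieldType) m n (U : 'M[F]_m) (V : 'M[F]_n)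
    (A : 'M[F]_(m, n)) :
  orthogonal_mx U -> orthogonal_mx V -> \rank (U *m A *m V) = \rank A.
Proof.
case=> /mulmx1_unit[_ U_unit] _ [/mulmx1_unit[_ V_unit] _].
by rewrite mxrankMfree ?row_free_unit // eqmxMfull // row_full_unit.
Qed.

Lemma mxtrace_mulmx_rows (R : comPzRingType) m n (C : 'M[R]_(m, n)) (P : 'M[R]_n) :
  \tr (C *m P *m C^T) = \sum_i (row i C *m P *m (row i C)^T) 0 0.
Proof.
apply: eq_bigr => i _; rewrite tr_row -row_mul !mxE.
by apply: eq_bigr => j _; rewrite !mxE.
Qed.

Lemma big_geq_mkord_widen (R : nmodType) (n r k : nat) (f : nat -> R) :
  (k <= n)%N ->
  \sum_(r <= i < k) f i = \sum_(i < n | (r <= i)%N) (if (i < k)%N then f i else 0).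
Proof.
move=> le_kn; rewrite -big_mkcondr big_geq_mkord.
by rewrite (big_ord_narrow_cond (P := fun i : 'I_n => (r <= i)%N)
  (F := fun i => f i) le_kn).
Qed.

Section DiagonalFactor.

Variables (R : realFieldType) (Ny M : nat) (Sigma : 'M[R]_(Ny, M)) (sigma : nat -> R).
Hypothesis Sigma_diag : forall (i : 'I_Ny) (j : 'I_M),
  Sigma i j = if (i : nat) == (j : nat) then sigma i else 0.

Lemma Zmat_diag r (rN : (r <= Ny)%N) (rM : (r <= M)%N) (V : 'M[R]_M) :
  Zmat rN rM Sigma V = rowsub (widen_ord rN) (Sigma *m V).
Proof.
apply/matrixP => i k; rewrite /Zmat !mxE.
rewrite (bigD1 i) //= (bigD1 (widen_ord rM i)) //= !mxE !Sigma_diag /= eqxx.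
congr (_ + _); rewrite big1 ?[RHS]big1 // => j ji; rewrite ?mxE Sigma_diag.
all: by rewrite ifN ?mul0r // eq_sym; apply: contra ji => /eqP ji; apply/eqP/val_inj.
Qed.

Lemma row_diag_sqnorm (i : 'I_Ny) :
  (row i Sigma *m (row i Sigma)^T) 0 0 = if (i < M)%N then sigma i ^+ 2 else 0.
Proof.
rewrite mxE; case: ltnP => [iM | Mi].
  rewrite (bigD1 (Ordinal iM)) //= big1 ?addr0 => [|j ji]; rewrite !mxE Sigma_diag.
    by rewrite eqxx expr2.
  by rewrite -val_eqE /= eq_sym in ji; rewrite (negbTE ji) mul0r.
rewrite big1 // => j _; rewrite !mxE Sigma_diag.
by rewrite gtn_eqF ?mul0r // (leq_trans (ltn_ord j) Mi).
Qed.

Hypotheses (sigma_ge0 : forall i : nat, (i < minn Ny M)%N -> 0 <= sigma i)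
  (sigma_nonincr : forall i j : nat, (i <= j)%N -> (j < minn Ny M)%N -> sigma j <= sigma i).

Lemma rank_diag_gt k : (k < minn Ny M)%N -> sigma k != 0 -> (k < \rank Sigma)%N.
Proof.
move=> k_min sk_neq0; have /andP[kN kM] : (k < Ny)%N && (k < M)%N by rewrite -leq_min.
set D := mxsub (widen_ord kN) (widen_ord kM) Sigma.
have D_diag : D = diag_mx (\row_(j < k.+1) sigma j).
  apply/matrixP => i j; rewrite !mxE Sigma_diag /=.
  by case: eqP => [/val_inj -> | /eqP]; rewrite ?eqxx // -val_eqE => /negbTE ->.
have D_unit : D \in unitmx.
  rewrite D_diag unitmxE det_diag unitfE; apply/prodf_neq0 => j _; rewrite mxE.
  have sk_gt0 : 0 < sigma k by rewrite lt_def sk_neq0 sigma_ge0.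
  by rewrite gt_eqF // (lt_le_trans sk_gt0) // sigma_nonincr // -ltnS.
rewrite -[k.+1](mxrank_unit D_unit) /D -[Sigma]mulmx1 mxsub_mul mulmx1.
exact: leq_trans (mxrankM_maxl _ _) (mxrankS (rowsub_sub _ _)).
Qed.

Lemma row_diag_sqnorm_rank (i : 'I_Ny) :
  (row i Sigma *m (row i Sigma)^T) 0 0 =
    if (i < \rank Sigma)%N then sigma i ^+ 2 else 0.
Proof.
rewrite row_diag_sqnorm; case: (ltnP i (\rank Sigma)) => [i_rk | rk_i].
  by rewrite (leq_trans i_rk (rank_leq_col Sigma)).
case: ltnP => // iM.
suff -> : sigma i = 0 by rewrite expr2 mul0r.
apply/eqP; apply: contraTT rk_i; rewrite -ltnNge.
by apply: rank_diag_gt; rewrite leq_min ltn_ord.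
Qed.

End DiagonalFactor.

Theorem lemma4 (R : realFieldType) (N Ny M : nat)
  (X : 'M[R]_(N, M)) (Yt : 'M[R]_(Ny, M)) (lambda : R) (hlam : 0 <= lambda)
  (U : 'M[R]_Ny) (Sigma : 'M[R]_(Ny, M)) (V : 'M[R]_M) (sigma : nat -> R)
  (hU : orthogonal_mx U) (hV : orthogonal_mx V)
  (hSigma : forall (i : 'I_Ny) (j : 'I_M),
      Sigma i j = if (i : nat) == (j : nat) then sigma i else 0)
  (hsig_nonneg : forall i : nat, (i < minn Ny M)%N -> 0 <= sigma i)
  (hsig_decr : forall i j : nat, (i <= j)%N -> (j < minn Ny M)%N -> sigma j <= sigma i)
  (hsvd : Yt = U *m Sigma *m V)
  (r : nat) (hr : (r <= \rank Yt)%N) (hrN : (r <= Ny)%N) (hrM : (r <= M)%N)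
  (S : {set 'I_N})
  (hS : S = set0 \/ posdef_mx (rows_of X S *m (rows_of X S)^T + lambda%:M)) :
  0 <= J X lambda Yt S - J X lambda (Zmat hrN hrM Sigma V) S /\
  J X lambda Yt S - J X lambda (Zmat hrN hrM Sigma V) S
    <= \sum_(r <= i < \rank Yt) sigma i ^+ 2.
Proof.
set P := ridge_hat (rows_of X S) lambda; set C := Sigma *m V.
set F := fun i : 'I_Ny => (row i C *m P *m (row i C)^T) 0 0.
have P_bounds (x : 'rV[R]_M) : 0 <= (x *m P *m x^T) 0 0 <= (x *m x^T) 0 0.
  apply: ridge_hat_form_bounds => //; apply: posdef_mx_unit.
  by case: hS => [-> | //]; apply: posdef_mx_dim0; rewrite cards0.
have JY : J X lambda Yt S = \sum_i F i.
  rewrite J_ridge_hat -mxtrace_mulmx_rows.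
  rewrite -(mxtrace_orthogonal_conj (C *m P *m C^T) hU).
  by rewrite hsvd -(mulmxA U) -/C trmx_mul !mulmxA.
have JZ : J X lambda (Zmat hrN hrM Sigma V) S = \sum_(i < Ny | (i < r)%N) F i.
  rewrite J_ridge_hat (Zmat_diag hSigma) mxtrace_mulmx_rows (big_ord_narrow hrN).
  by apply: eq_bigr => i _; rewrite row_rowsub.
have JYZ : J X lambda Yt S - J X lambda (Zmat hrN hrM Sigma V) S =
    \sum_(i < Ny | (r <= i)%N) F i.
  rewrite JY JZ (bigID (fun i : 'I_Ny => i < r)%N) /= addrAC subrr add0r.
  by apply: eq_bigl => i; rewrite -leqNgt.
rewrite JYZ; split.
  by apply: sumr_ge0 => i _; have /andP[] := P_bounds (row i C).
have rank_Yt : \rank Yt = \rank Sigma by rewrite hsvd mxrank_orthogonal_conj.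
rewrite rank_Yt (big_geq_mkord_widen _ _ (rank_leq_row Sigma)).
apply: ler_sum => i _.
rewrite -(row_diag_sqnorm_rank hSigma hsig_nonneg hsig_decr).
rewrite -(mulmx_tr_orthogonal _ hV) -row_mul.
by have /andP[_ le_P] := P_bounds (row i C).
Qed.
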